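(* For $n\geq 3$, $$b(n)=2+n+\sum_{k=2}^{n}\binom{n}{k}\, b_{-}(k).$$ Furthermore, $b_{-}(2)=2$, and for all $k\geq 3$, $$b_{-}(k)=b_{-}^{-}(k)+2+\sum_{i=2}^{k-1}\binom{k}{i}\, b_{-}(i).$$
   Context: For $n\in\mathbb{N}$, the Boolean lattice $B(n)$ is the set of binary words of length $n$ ordered coordinatewise (i.e. $B(n)=\mathbf{2}^n$ with $\mathbf{2}$ the chain $0<1$). For $0\leq \ell\leq n$, the level $L_\ell(n)$ is the set of words with exactly $\ell$ ones. For $n\geq 2$, $B_{-}(n):=\bigcup_{i=2}^n L_i(n)$ and $B^{-}(n):=\bigcup_{i=0}^{n-2}L_i(n)$, and for $n\geq 3$, $B_{-}^{-}(n):=\bigcup_{i=2}^{n-2}L_i(n)$, each with the induced order. For a finite poset $P$, $d(P)$ is the number of down-sets of $P$ (subsets closed under going down, including the empty set). Set $b(n):=d(B(n))$ (the $n$-th Dedekind number), $b_{-}(n):=d(B_{-}(n))$, $b_{-}^{-}(n):=d(B_{-}^{-}(n))$. *)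

From mathcomp Require Import all_boot all_order.
Set Implicit Arguments. Unset Strict Implicit. Unset Printing Implicit Defensive.

(* The Boolean lattice B(n) = 2^n is modelled as {set 'I_n} ordered by
   inclusion (a binary word of length n <-> the set of positions carrying 1).
   The level L_l(n) is the set of subsets of cardinality l. *)

Definition is_downset (n : nat) (P : pred {set 'I_n}) (D : {set {set 'I_n}}) : bool :=
  [forall x, (x \in D) ==> P x] &&
  [forall x, forall y, [&& x \in D, P y & y \subset x] ==> (y \in D)].

Definition num_downsets (n : nat) (P : pred {set 'I_n}) : nat :=
  #|[set D : {set {set 'I_n}} | is_downset P D]|.

Definition b (n : nat) : nat := num_downsets (fun _ : {set 'I_n} => true).
(* B_-(n) = union of levels 2..n *)
Definition b_low (n : nat) : nat :=
  num_downsets (fun x : {set 'I_n} => 2 <= #|x|).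
(* B_-^-(n) = union of levels 2..n-2 *)
Definition b_low_up (n : nat) : nat :=
  num_downsets (fun x : {set 'I_n} => (2 <= #|x|) && (#|x| <= n - 2)).

From mathcomp Require Import all_boot all_order zify.
Set Implicit Arguments. Unset Strict Implicit. Unset Printing Implicit Defensive.

(* A nonempty down-set D of B(n) is determined by its set A of atoms together
   with its part above level 1, which is an arbitrary down-set of the levels
   >= 2 of the cube 2^A, a copy of B_-(|A|); summing over A gives
   b(n) = 1 + sum_k C(n,k) b_-(k).
   For the recursion, sort the down-sets of B(k) by whether they contain all
   sets of size <= 1 and whether they avoid all sets of size >= k-1.  Both
   classes have b_-(k) elements (the second one by complementation, which maps
   B^-(k) anti-isomorphically onto B_-(k)), their intersection has b_-^-(k)
   elements, and the down-sets in neither class are the k down-sets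
   {y | j \notin y}.  Hence b(k) + b_-^-(k) = 2 b_-(k) + k, and the first
   identity for b(k) turns this into the recursion. *)

Lemma card_in_bij (T U : finType) (A : {set T}) (B : {set U}) (f : T -> U) (g : U -> T) :
  {in A, forall x, f x \in B} -> {in B, forall y, g y \in A} ->
  {in A, cancel f g} -> {in B, cancel g f} -> #|A| = #|B|.
Proof.
move=> fAB gBA fK gK; rewrite -(card_in_imset (can_in_inj fK)).
apply: eq_card => y; apply/imsetP/idP => [[x xA ->]|yB]; first exact: fAB.
by exists (g y); rewrite ?gBA ?gK.
Qed.

Lemma card_subset_leq (T : finType) m (x y : {set T}) : #|x| <= m -> y \subset x -> #|y| <= m.
Proof. by move=> xm /subset_leq_card/leq_trans; apply. Qed.

Lemma cards_le1_cases (T : finType) (x : {set T}) :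
  #|x| <= 1 -> x = set0 \/ exists z, x = [set z].
Proof.
rewrite leq_eqVlt ltnS leqn0 orbC => /orP[|/cards1P]; last by right.
by rewrite cards_eq0 => /eqP; left.
Qed.

Lemma eq_setC1 (T : finType) (j : T) (x : {set T}) :
  j \notin x -> #|T|.-1 <= #|x| -> x = [set~ j].
Proof.
move=> jx Tx; apply/eqP; rewrite eqEcard cardsC1 Tx andbT.
by rewrite subsetC sub1set inE.
Qed.

Lemma card_set_ord_leq n (x : {set 'I_n}) : #|x| <= n.
Proof. by rewrite -[leqRHS]card_ord max_card. Qed.

Lemma cardsC_ord n (x : {set 'I_n}) : #|~: x| = n - #|x|.
Proof. by rewrite cardsCs setCK card_ord. Qed.

Lemma sum_card_set (T : finType) (F : nat -> nat) :
  \sum_(A : {set T}) F #|A| = \sum_(k < #|T|.+1) 'C(#|T|, k) * F k.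
Proof.
rewrite (partition_big (fun A : {set T} => (inord #|A| : 'I_#|T|.+1)) predT) //=.
apply: eq_bigr => k _; rewrite -card_draws -sum_nat_const.
have card_k (A : {set T}) : (inord #|A| == k) = (#|A| == k).
  by rewrite -val_eqE /= inordK // ltnS max_card.
by apply: eq_big => [A|A]; rewrite card_k ?inE // => /eqP->.
Qed.

Lemma downsetP n (P : pred {set 'I_n}) (D : {set {set 'I_n}}) : reflect
  ((forall x, x \in D -> P x) /\ (forall x y, x \in D -> P y -> y \subset x -> y \in D))
  (is_downset P D).
Proof.
apply: (iffP andP) => [[/forallP DP /forallP Dclosed]|[DP Dclosed]]; split.
- by move=> x xD; have := DP x; rewrite xD.
- by move=> x y xD Py yx; have /forallP/(_ y) := Dclosed x; rewrite xD Py yx.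
- by apply/forallP=> x; apply/implyP/DP.
- by apply/forallP=> x; apply/forallP=> y; apply/implyP=> /and3P[]; apply: Dclosed.
Qed.

Lemma is_downset0 n (P : pred {set 'I_n}) : is_downset P set0.
Proof. by apply/downsetP; split=> x; rewrite inE. Qed.

Lemma num_downsets_ext n (P Q : pred {set 'I_n}) : P =1 Q -> num_downsets P = num_downsets Q.
Proof.
move=> PQ; apply: eq_card => D; rewrite !inE /is_downset.
by congr andb; apply: eq_forallb => x; [|apply: eq_forallb => y]; rewrite PQ.
Qed.

Lemma num_downsets_pred0 n (P : pred {set 'I_n}) : P =1 xpred0 -> num_downsets P = 1.
Proof.
move=> P0; rewrite /num_downsets -(cards1 (set0 : {set {set 'I_n}})).
apply: eq_card => D; rewrite !inE; apply/idP/eqP=> [/downsetP[DP _]|->]; last exact: is_downset0.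
by apply/setP=> x; rewrite inE; apply/negP=> /DP; rewrite P0.
Qed.

Lemma num_downsets_pred1 n (P : pred {set 'I_n}) a : P =1 pred1 a -> num_downsets P = 2.
Proof.
move=> Pa; rewrite /num_downsets (_ : [set D | is_downset P D] = [set set0; [set a]]).
  by rewrite cards2; case: eqP => // /setP/(_ a); rewrite !inE eqxx.
apply/setP=> D; rewrite !inE; apply/idP/idP=> [/downsetP[DP _]|].
  have : D \subset [set a] by apply/subsetP=> x /DP; rewrite Pa => /eqP->; apply: set11.
  by rewrite subset1 orbC.
case/orP=> /eqP->; first exact: is_downset0.
apply/downsetP; split=> [x|x y]; rewrite !inE => /eqP->; first by rewrite Pa /=.
by rewrite Pa => /eqP->.
Qed.

Lemma is_downset_restrict n (R : pred {set 'I_n}) (D : {set {set 'I_n}}) :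
  (forall x y : {set 'I_n}, R x -> y \subset x -> R y) ->
  is_downset R D = is_downset (fun _ => true) D && [forall x in D, R x].
Proof.
move=> Rclosed; apply/downsetP/andP => [[DR Dclosed]|[/downsetP[_ Dclosed] /forall_inP DR]].
  split; last exact/forall_inP.
  apply/downsetP; split=> // x y xD _ yx.
  by apply: (Dclosed x) => //; apply: Rclosed (DR x xD) yx.
by split=> // x y xD _ yx; apply: (Dclosed x).
Qed.

Lemma num_downsets_contain n (Q L : pred {set 'I_n}) :
  (forall x y : {set 'I_n}, L x -> y \subset x -> L y) ->
  #|[set D | is_downset Q D & [forall x, Q x && L x ==> (x \in D)]]|
    = num_downsets (fun x => Q x && ~~ L x).
Proof.
move=> Lclosed; pose B := [set x | Q x && L x].
apply: (@card_in_bij _ _ _ _ (fun D : {set {set 'I_n}} => [set x in D | ~~ L x])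
                             (fun E => E :|: B)).
- move=> D; rewrite !inE => /andP[/downsetP[DQ Dclosed] _]; apply/downsetP.
  split=> [x|x y]; rewrite !inE; first by case/andP=> /DQ ->.
  by case/andP=> xD _ /andP[Qy nLy] yx; rewrite nLy (Dclosed x).
- move=> E; rewrite !inE => /downsetP[EQL Eclosed]; apply/andP; split.
    apply/downsetP; split=> [x|x y]; rewrite !inE.
      by case/orP=> [/EQL|] /andP[].
    move=> xEB Qy yx; case Ly: (L y); first by rewrite Qy orbT.
    case/orP: xEB => [xE|/andP[_ Lx]]; first by rewrite (Eclosed x) ?Qy ?Ly.
    by rewrite (Lclosed x) in Ly.
  by apply/forallP=> x; apply/implyP=> QLx; rewrite !inE QLx orbT.
- move=> D; rewrite !inE => /andP[/downsetP[DQ _] /forallP DL]; apply/setP=> x.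
  rewrite !inE; case Lx: (L x); rewrite ?andbF ?andbT ?orbF //=.
  by apply/idP/idP=> [Qx|/DQ //]; have := DL x; rewrite Qx Lx.
- move=> E; rewrite !inE => /downsetP[EQL _]; apply/setP=> x; rewrite !inE.
  case Lx: (L x); rewrite ?andbF ?andbT ?orbF //=.
  by apply/esym/negbTE/negP=> /EQL; rewrite Lx andbF.
Qed.

Lemma is_downset_preim m n (P : pred {set 'I_m}) (Q : pred {set 'I_n})
    (g : {set 'I_n} -> {set 'I_m}) (D : {set {set 'I_m}}) :
  (forall y, Q y -> P (g y)) ->
  (forall y z, Q y -> Q z -> z \subset y -> g z \subset g y) ->
  is_downset P D -> is_downset Q [set y | Q y & g y \in D].
Proof.
move=> gQP gS /downsetP[_ Dclosed]; apply/downsetP; split=> [y|y z]; rewrite !inE.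
  by case/andP.
by case/andP=> Qy gyD Qz zy; rewrite Qz (Dclosed (g y)) ?gQP ?gS.
Qed.

Lemma is_downset_preimC m n (P : pred {set 'I_m}) (Q : pred {set 'I_n})
    (g : {set 'I_n} -> {set 'I_m}) (D : {set {set 'I_m}}) :
  (forall y, Q y -> P (g y)) ->
  (forall y z, Q y -> Q z -> z \subset y -> g y \subset g z) ->
  is_downset P D -> is_downset Q [set y | Q y & g y \notin D].
Proof.
move=> gQP gS /downsetP[_ Dclosed]; apply/downsetP; split=> [y|y z]; rewrite !inE.
  by case/andP.
case/andP=> Qy gyD Qz zy; rewrite Qz; apply: contra gyD => gzD.
by rewrite (Dclosed (g z)) ?gQP ?gS.
Qed.

Section Transport.
Variables (m n : nat) (P : pred {set 'I_m}) (Q : pred {set 'I_n}).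
Variables (f : {set 'I_m} -> {set 'I_n}) (g : {set 'I_n} -> {set 'I_m}).
Hypotheses (fPQ : forall x, P x -> Q (f x)) (gQP : forall y, Q y -> P (g y)).
Hypotheses (fK : forall x, P x -> g (f x) = x) (gK : forall y, Q y -> f (g y) = y).

Lemma num_downsets_iso :
  (forall x y, P x -> P y -> y \subset x -> f y \subset f x) ->
  (forall x y, Q x -> Q y -> y \subset x -> g y \subset g x) ->
  num_downsets P = num_downsets Q.
Proof.
move=> fS gS; rewrite /num_downsets.
apply: (@card_in_bij _ _ _ _ (fun D : {set {set 'I_m}} => [set y | Q y & g y \in D])
                             (fun E : {set {set 'I_n}} => [set x | P x & f x \in E])).
- by move=> D; rewrite !inE; apply: is_downset_preim.
- by move=> E; rewrite !inE; apply: is_downset_preim.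
- move=> D; rewrite inE => /downsetP[DP _]; apply/setP=> x; rewrite !inE.
  by case Px: (P x); [rewrite fPQ ?fK | apply/esym/negP => /DP; rewrite Px].
- move=> E; rewrite inE => /downsetP[EQ _]; apply/setP=> y; rewrite !inE.
  by case Qy: (Q y); [rewrite gQP ?gK | apply/esym/negP => /EQ; rewrite Qy].
Qed.

(* An anti-isomorphism sends the complement of a down-set, an up-set, to a down-set. *)
Lemma num_downsets_anti :
  (forall x y, P x -> P y -> y \subset x -> f x \subset f y) ->
  (forall x y, Q x -> Q y -> y \subset x -> g x \subset g y) ->
  num_downsets P = num_downsets Q.
Proof.
move=> fS gS; rewrite /num_downsets.
apply: (@card_in_bij _ _ _ _ (fun D : {set {set 'I_m}} => [set y | Q y & g y \notin D])
                             (fun E : {set {set 'I_n}} => [set x | P x & f x \notin E])).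
- by move=> D; rewrite !inE; apply: is_downset_preimC.
- by move=> E; rewrite !inE; apply: is_downset_preimC.
- move=> D; rewrite inE => /downsetP[DP _]; apply/setP=> x; rewrite !inE.
  by case Px: (P x); [rewrite fPQ ?fK ?negbK | apply/esym/negP => /DP; rewrite Px].
- move=> E; rewrite inE => /downsetP[EQ _]; apply/setP=> y; rewrite !inE.
  by case Qy: (Q y); [rewrite gQP ?gK ?negbK | apply/esym/negP => /EQ; rewrite Qy].
Qed.

End Transport.

Section SubsetTransport.
Variables (n : nat) (A : {set 'I_n}).
Let h : 'I_#|A| -> 'I_n := enum_val.

Let h_inj : injective h. Proof. exact: enum_val_inj. Qed.

Let imset_preimset (y : {set 'I_n}) : y \subset A -> h @: (h @^-1: y) = y.
Proof.
move=> yA; apply/setP=> z; apply/imsetP/idP => [[i]|zy]; first by rewrite inE => iy ->.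
have zA := subsetP yA z zy.
by exists (enum_rank_in zA z); rewrite ?inE /h enum_rankK_in.
Qed.

Let preimset_imset (x : {set 'I_#|A|}) : h @^-1: (h @: x) = x.
Proof. by apply/setP=> i; rewrite inE mem_imset. Qed.

Let imset_sub (x : {set 'I_#|A|}) : h @: x \subset A.
Proof. by apply/subsetP=> z /imsetP[i _ ->]; apply: enum_valP. Qed.

Lemma num_downsets_subset (p : pred nat) :
  num_downsets (fun y : {set 'I_n} => p #|y| && (y \subset A))
    = num_downsets (fun x : {set 'I_#|A|} => p #|x|).
Proof.
apply: (@num_downsets_iso _ _ _ _ (fun y => h @^-1: y) (fun x => h @: x)) => /=.
- by move=> y /andP[py /imset_preimset yE]; rewrite -yE card_imset in py.
- by move=> x px; rewrite card_imset // px imset_sub.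
- by move=> y /andP[_ /imset_preimset].
- by move=> x _; apply: preimset_imset.
- by move=> y z _ _; apply: preimsetS.
- by move=> y z _ _; apply: imsetS.
Qed.

End SubsetTransport.

Definition downsets_B n := [set D : {set {set 'I_n}} | is_downset (fun _ => true) D].

Definition atoms n (D : {set {set 'I_n}}) : {set 'I_n} := [set i | [set i] \in D].

Lemma atoms_downsetE n (A : {set 'I_n}) (D : {set {set 'I_n}}) :
  D \in downsets_B n ->
  (D != set0) && (atoms D == A)
    = [forall x in D, x \subset A]
      && [forall x : {set 'I_n}, (x \subset A) && (#|x| <= 1) ==> (x \in D)].
Proof.
rewrite inE => /downsetP[_ Dclosed].
apply/andP/andP=> [[D0 /eqP<-]|[/forall_inP DA /forallP Dsmall]].
  split; apply/forallP=> x; apply/implyP.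
    by move=> xD; apply/subsetP=> z zx; rewrite inE (Dclosed x) ?sub1set.
  case/andP=> xA /cards_le1_cases[->|[z xz]].
    by case/set0Pn: D0 => d dD; rewrite (Dclosed d) ?sub0set.
  by move: xA; rewrite xz sub1set inE.
have small (x : {set 'I_n}) : x \subset A -> #|x| <= 1 -> x \in D.
  by move=> xA x1; have := Dsmall x; rewrite xA x1.
split; first by apply/set0Pn; exists set0; rewrite small ?sub0set ?cards0.
apply/eqP/setP=> i; rewrite inE; apply/idP/idP=> [/DA|iA]; first by rewrite sub1set.
by rewrite small ?sub1set ?cards1.
Qed.

Lemma b_low_subset n (A : {set 'I_n}) :
  b_low #|A| = #|[set D | is_downset (fun x => x \subset A) D &
                   [forall x : {set 'I_n}, (x \subset A) && (#|x| <= 1) ==> (x \in D)]]|.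
Proof.
rewrite /b_low -(num_downsets_subset A (leq 2)) num_downsets_contain.
  by apply: num_downsets_ext => y; rewrite andbC ltnNge.
exact: card_subset_leq.
Qed.

Lemma b_sum_atoms n : b n = 1 + \sum_(A : {set 'I_n}) b_low #|A|.
Proof.
rewrite /b /num_downsets -/(downsets_B n) (cardsD1 set0) inE is_downset0; congr (_ + _).
rewrite -sum1_card (partition_big (@atoms n) predT) //=; apply: eq_bigr => A _.
rewrite b_low_subset -sum1_card; apply: eq_bigl => D.
rewrite !inE (@is_downset_restrict _ (fun x => x \subset A)); last first.
  by move=> x y xA yx; exact: subset_trans yx xA.
case Ddown: (is_downset _ D); rewrite ?andbF //= andbT atoms_downsetE //.
by rewrite inE.
Qed.

Lemma b_low_le1 n : n <= 1 -> b_low n = 1.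
Proof.
move=> n1; apply: num_downsets_pred0 => x /=; apply/negbTE; rewrite -ltnNge ltnS.
exact: leq_trans (card_set_ord_leq x) n1.
Qed.

Lemma b_low2 : b_low 2 = 2.
Proof.
apply: (num_downsets_pred1 (a := setT)) => x /=.
by rewrite eqEcard subsetT cardsT card_ord.
Qed.

Lemma b_binomial_sum n : 0 < n -> b n = 2 + n + \sum_(2 <= k < n.+1) 'C(n, k) * b_low k.
Proof.
move=> n_gt0; rewrite b_sum_atoms sum_card_set card_ord.
rewrite -(big_mkord xpredT (fun k => 'C(n, k) * b_low k)) big_ltn // big_ltn ?ltnS //.
by rewrite bin0 bin1 !b_low_le1 // !muln1 addnA.
Qed.

Section CoatomCount.
Variable k : nat.

Definition downsets_with_atoms := [set D : {set {set 'I_k}} |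
  is_downset (fun _ => true) D & [forall x : {set 'I_k}, (#|x| <= 1) ==> (x \in D)]].

Definition downsets_without_coatoms := [set D : {set {set 'I_k}} |
  is_downset (fun _ => true) D & [forall x in D, #|x| <= k - 2]].

Definition avoiding (j : 'I_k) := [set y : {set 'I_k} | j \notin y].

Lemma card_downsets_with_atoms : #|downsets_with_atoms| = b_low k.
Proof.
apply: etrans (num_downsets_contain (fun _ => true) (@card_subset_leq _ 1)) _.
by apply: num_downsets_ext => x; rewrite ltnNge.
Qed.

Lemma card_downsets_without_coatoms : 1 < k -> #|downsets_without_coatoms| = b_low k.
Proof.
move=> k_gt1.
have -> : #|downsets_without_coatoms| = num_downsets (fun x : {set 'I_k} => #|x| <= k - 2).
  apply: eq_card => D; rewrite !inE (@is_downset_restrict _ (fun x => #|x| <= k - 2)) //.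
  exact: card_subset_leq.
rewrite /b_low; apply: (@num_downsets_anti _ _ _ _ (@setC _) (@setC _))
  => [x|x|x _|x _|x y _ _|x y _ _]; rewrite ?setCK ?setCS // cardsC_ord;
  by move: (card_set_ord_leq x); lia.
Qed.

Lemma card_downsets_with_atoms_without_coatoms :
  2 < k -> #|downsets_with_atoms :&: downsets_without_coatoms| = b_low_up k.
Proof.
move=> k_gt2.
have -> : b_low_up k = num_downsets (fun x : {set 'I_k} => (#|x| <= k - 2) && ~~ (#|x| <= 1)).
  by apply: num_downsets_ext => x; rewrite andbC ltnNge.
rewrite -num_downsets_contain; last exact: card_subset_leq.
apply: eq_card => D; rewrite !inE (@is_downset_restrict _ (fun x => #|x| <= k - 2)); last first.
  exact: card_subset_leq.
case: (is_downset _ D) => //=; rewrite andbC; congr andb; apply: eq_forallb => x.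
by case: (leqP #|x| 1) => [x1|_]; rewrite ?andbF // andbT (leq_trans x1) // leq_subRL; lia.
Qed.

Lemma downset_eq_avoiding (D : {set {set 'I_k}}) (j : 'I_k) :
  D \in downsets_B k -> [set j] \notin D -> [set~ j] \in D -> D = avoiding j.
Proof.
rewrite inE => /downsetP[_ Dclosed] jD cjD; apply/setP=> y; rewrite inE.
apply/idP/idP=> [yD|jy]; first by apply: contra jD => jy; rewrite (Dclosed y) ?sub1set.
by rewrite (Dclosed [set~ j]) // subsetC sub1set inE.
Qed.

Lemma downsets_B_diff : 1 < k ->
  downsets_B k :\: (downsets_with_atoms :|: downsets_without_coatoms)
    = [set avoiding j | j : 'I_k].
Proof.
move=> k_gt1; apply/setP=> D; rewrite !inE; apply/idP/imsetP=> [|[j _ ->]].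
  case/andP=> /norP[] + + Ddown; rewrite Ddown /=.
  case/forallPn=> x; rewrite negb_imply => /andP[x1 xD].
  case/forall_inPn=> y yD; rewrite -ltnNge => ky.
  move/downsetP: (Ddown) => [_ Dclosed].
  have [x0|[j xj]] := cards_le1_cases x1; first by rewrite x0 (Dclosed y) ?sub0set in xD.
  have jy : j \notin y by apply: contra xD => jy; rewrite xj (Dclosed y) ?sub1set.
  exists j => //; apply: downset_eq_avoiding; [by rewrite inE | by rewrite -xj |].
  by rewrite -(eq_setC1 jy) // card_ord; apply: leq_trans ky; rewrite -subn1; lia.
have Aj_down : is_downset (fun _ => true) (avoiding j).
  apply/downsetP; split=> // x y; rewrite !inE => jx _ yx.
  by apply: contra jx; apply: subsetP.
rewrite Aj_down andbT /=; apply/norP; split.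
  by apply/forallPn; exists [set j]; rewrite cards1 !inE eqxx.
apply/forall_inPn; exists [set~ j]; first by rewrite !inE eqxx.
by rewrite cardsC1 card_ord -ltnNge; lia.
Qed.

Lemma card_avoiding_set : #|[set avoiding j | j : 'I_k]| = k.
Proof.
rewrite card_imset ?card_ord // => i j /setP/(_ [set j]).
by rewrite !inE eqxx /=; case: eqP.
Qed.

Lemma b_add_b_low_up : 2 < k -> b k + b_low_up k = 2 * b_low k + k.
Proof.
move=> k_gt2; have k_gt1 : 1 < k by apply: ltnW.
have := cardsID (downsets_with_atoms :|: downsets_without_coatoms) (downsets_B k).
rewrite downsets_B_diff // card_avoiding_set.
have /setIidPr -> : downsets_with_atoms :|: downsets_without_coatoms \subset downsets_B k.
  by apply/subsetP=> D; rewrite !inE => /orP[] /andP[].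
have := cardsUI downsets_with_atoms downsets_without_coatoms.
rewrite card_downsets_with_atoms card_downsets_without_coatoms //.
rewrite card_downsets_with_atoms_without_coatoms // /b /num_downsets -/(downsets_B k).
lia.
Qed.

End CoatomCount.

Theorem theorem2 :
  (forall n : nat, 3 <= n ->
     b n = 2 + n + \sum_(2 <= k < n.+1) 'C(n, k) * b_low k) /\
  b_low 2 = 2 /\
  (forall k : nat, 3 <= k ->
     b_low k = b_low_up k + 2 + \sum_(2 <= i < k) 'C(k, i) * b_low i).
Proof.
split; first by move=> n n_ge3; apply: b_binomial_sum; lia.
split; first exact: b_low2.
move=> k k_ge3; have := b_add_b_low_up k_ge3.
rewrite b_binomial_sum; last lia.
rewrite big_nat_recr /=; last lia.
rewrite binn mul1n; lia.
Qed.
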